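(* Let $\mathcal N$ be a monotonic max-sum $(\mathrm{Col},\delta)$-GNN with $L$ layers and dimensions $\delta_0,\dots,\delta_L$. Then for every $0\le \ell\le L$ and every $1\le i\le \delta_\ell$, the set $X_\ell^i$ satisfies $X_\ell^i\subseteq \mathbb R_{\ge 0}$, and for every $\alpha\in\mathbb R$ the set $X_\ell^i\setminus X_\ell^i{}_{>\alpha}$ is finite, where $X_\ell^i{}_{>\alpha}=\{\alpha'\in X_\ell^i\mid \alpha'>\alpha\}$. (Consequently every nonempty $X_\ell^i{}_{>\alpha}$ has a least element.)
   Context: Graphs and GNNs. For a finite set of colours $\mathrm{Col}$ and $\delta\in\mathbb N$, a $(\mathrm{Col},\delta)$-graph is $G=\langle V,\{E^c\}_{c\in\mathrm{Col}},\lambda\rangle$ where $V$ is a finite set of vertices, $E^c\subseteq V\times V$ for each colour $c$, and $\lambda$ assigns to each $v\in V$ a feature vector $\mathbf v\in\mathbb R^\delta$. A $(\mathrm{Col},\delta)$-GNN $\mathcal N$ with $L\ge 1$ layers consists of dimensions $\delta_0=\delta,\delta_1,\dots,\delta_{L-1},\delta_L=\delta$; real matrices $A_\ell$ and $B_\ell^c$ of size $\delta_\ell\times\delta_{\ell-1}$ and bias vectors $b_\ell\in\mathbb R^{\delta_\ell}$ for $1\le\ell\le L$, $c\in\mathrm{Col}$; aggregation functions $\mathrm{agg}_\ell$ from finite real multisets to $\mathbb R$ (applied componentwise to finite multisets of vectors); an activation function $\sigma:\mathbb R\to\mathbb R$ and a classification function $\mathrm{cls}:\mathbb R\to\{0,1\}$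 (both applied componentwise). Applying $\mathcal N$ to $G$ produces labellings $\lambda_0=\lambda,\lambda_1,\dots,\lambda_L$ where, writing $\mathbf v_\ell$ for the vector of $v$ under $\lambda_\ell$, $\mathbf v_\ell=\sigma\big(A_\ell\mathbf v_{\ell-1}+\sum_{c\in\mathrm{Col}}B_\ell^c\,\mathrm{agg}_\ell(\{\!\{\mathbf u_{\ell-1}\mid (v,u)\in E^c\}\!\})+b_\ell\big)$. Max-sum aggregation. For $k\in\mathbb N_0\cup\{\infty\}$ and a finite real multiset $S$, let $m=\min(k,|S|)$; $\mathrm{maxsum}_k(S)=0$ if $m=0$, and otherwise it is the sum of the $m$ largest elements of $S$, counting multiplicities. Monotonic max-sum GNN: a $(\mathrm{Col},\delta)$-GNN such that (i) all entries of every $A_\ell$ and $B_\ell^c$ are nonnegative; (ii) each $\mathrm{agg}_\ell$ is $\mathrm{maxsum}_{k_\ell}$ for some $k_\ell\in\mathbb N_0\cup\{\infty\}$; (iii) $\sigma$ is monotonically increasing ($x<y\Rightarrow\sigma(x)\le\sigma(y)$), unbounded (for every $y$ there is $x$ with $\sigma(x)>y$), and takes values in $\mathbb R_{\ge0}$ with range $\mathbb R_{\ge 0}$; (iv) $\mathrm{cls}$ is a step function with some threshold $t\in\mathbb R$: $\mathrm{cls}(t')=0$ for $t'<t$ and $\mathrm{cls}(t')=1$ for $t'\ge t$. Sets $X_\ell^i$. A $(\mathrm{Col},\ell)$-multiset family $\mathcal Y$ assigns to each $c\in\mathrm{Col}$ a finite multiset $\mathcal Y^c$ of vectors of dimension $\delta_\ell$.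 For $1\le\ell\le L$, $1\le i\le\delta_\ell$, a vector $\mathbf x$ of dimension $\delta_{\ell-1}$ and a $(\mathrm{Col},\ell-1)$-multiset family $\mathcal Y$, let $\mathrm{Val}_\ell^i(\mathbf x,\mathcal Y)$ be the $i$-th component of $A_\ell\mathbf x+\sum_{c}B_\ell^c\,\mathrm{maxsum}_{k_\ell}(\mathcal Y^c)+b_\ell$. Define $X_0^i=\{0,1\}$ for $1\le i\le\delta_0$, and for $\ell\ge1$ let $X_\ell^i$ be the set of all values $\sigma(\mathrm{Val}_\ell^i(\mathbf x,\mathcal Y))$ where $\mathbf x$ ranges over vectors of dimension $\delta_{\ell-1}$ with $x_j\in X_{\ell-1}^j$ for all $j$, and $\mathcal Y$ ranges over $(\mathrm{Col},\ell-1)$-multiset families such that $y_j\in X_{\ell-1}^j$ for all $c$, all $\mathbf y\in\mathcal Y^c$ and all $j$. *)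

From HB Require Import structures.
From mathcomp Require Import all_boot all_order all_algebra.
From mathcomp Require Import boolp classical_sets cardinality reals.
Set Implicit Arguments. Unset Strict Implicit. Unset Printing Implicit Defensive.
Import Order.TTheory GRing.Theory Num.Theory.
Local Open Scope ring_scope.

(* k in N_0 \cup {infinity}: [None] encodes infinity. *)
Definition maxsum {R : realType} (k : option nat) (S : seq R) : R :=
  let m := match k with Some k' => minn k' (size S) | None => size S end in
  \sum_(x <- take m (sort (fun x y : R => y <= x) S)) x.

Definition maxsum_vec {R : realType} {n : nat} (k : option nat)
  (S : seq 'cV[R]_n) : 'cV[R]_n :=
  \col_(j < n) maxsum k [seq (v : 'cV[R]_n) j 0 | v <- S].

(* A (Col,delta)-GNN whose aggregation functions are max-sum functions.
   Layer l+1 (1 <= l+1 <= L) has parameters A l, B l c, b l, k l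
   (0-based indexing of layers); dims l = delta_l. *)
Record maxsumGNN (R : realType) (Col : finType) (delta : nat) := MkGNN {
  L : nat;
  dims : nat -> nat;
  Amat : forall l : nat, 'M[R]_(dims l.+1, dims l);
  Bmat : forall l : nat, Col -> 'M[R]_(dims l.+1, dims l);
  bvec : forall l : nat, 'cV[R]_(dims l.+1);
  kagg : nat -> option nat;
  sigma : R -> R;
  cls : R -> bool
}.

Definition is_GNN {R : realType} {Col : finType} {delta : nat}
  (N : maxsumGNN R Col delta) : Prop :=
  (1 <= L N)%N /\ dims N 0 = delta /\ dims N (L N) = delta.

Definition monotonic {R : realType} {Col : finType} {delta : nat}
  (N : maxsumGNN R Col delta) : Prop :=
  (forall l, (l < L N)%N -> forall i j, 0 <= Amat N l i j) /\
  (forall l, (l < L N)%N -> forall c i j, 0 <= Bmat N l c i j) /\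
  (forall x y, x < y -> sigma N x <= sigma N y) /\
  (forall y, exists x, sigma N x > y) /\
  (forall x, 0 <= sigma N x) /\
  (forall y, 0 <= y -> exists x, sigma N x = y) /\
  (exists t : R, forall t', cls N t' = (t <= t')).
(* (ii) is built in: every aggregation is maxsum_{kagg l}. *)

Definition Val {R : realType} {Col : finType} {delta : nat}
  (N : maxsumGNN R Col delta) (l : nat) (x : 'cV[R]_(dims N l))
  (Y : Col -> seq 'cV[R]_(dims N l)) : 'cV[R]_(dims N l.+1) :=
  Amat N l *m x + \sum_(c : Col) (Bmat N l c *m maxsum_vec (kagg N l) (Y c))
  + bvec N l.

(* Xset N l i r  <->  r \in X_l^{i+1}  (components 0-based). *)
Fixpoint Xset {R : realType} {Col : finType} {delta : nat}
  (N : maxsumGNN R Col delta) (l : nat) : 'I_(dims N l) -> R -> Prop :=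
  match l return 'I_(dims N l) -> R -> Prop with
  | 0 => fun _ r => r = 0 \/ r = 1
  | l'.+1 => fun i r =>
      exists (x : 'cV[R]_(dims N l')) (Y : Col -> seq 'cV[R]_(dims N l')),
        (forall j, @Xset R Col delta N l' j (x j 0)) /\
        (forall c y, y \in Y c -> forall j, @Xset R Col delta N l' j (y j 0)) /\
        r = sigma N (@Val R Col delta N l' x Y i 0)
  end.
Arguments Val {R Col delta} N l x Y.
Arguments Xset {R Col delta} N l _ _.

From HB Require Import structures.
From mathcomp Require Import all_boot all_order all_algebra.
From mathcomp Require Import boolp classical_sets cardinality reals.
From mathcomp Require Import lra.
Import Order.TTheory GRing.Theory Num.Theory.
Local Open Scope ring_scope.
Local Open Scope classical_set_scope.
Set Implicit Arguments. Unset Strict Implicit.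

(* Call a set Z of reals down-finite if Z consists of nonnegative reals and,
   for every bound g, only finitely many elements of Z lie below g.  For such
   a set and any alpha, the elements of Z that are not > alpha form a finite
   set, which is the claim of the theorem for Z = X_l^i.

   The proof is by induction on the layer l.  X_0^i = {0, 1} is down-finite.
   The first section shows that down-finiteness is preserved by
   - Minkowski sums, scaling by a nonnegative factor, and hence nonnegative
     linear combinations of finitely many down-finite sets;
   - forming all finite sums of elements of one down-finite set (the key
     point: a sum below g has a bounded number of positive summands), and
     hence the max-sum aggregation, which sums a subsequence;
   - images under nonnegative, monotone and unbounded maps.
   The second section writes X_(l+1)^i as the image under the activation of
   such a combination of the sets X_l^j, which closes the induction. *)

Section DownFinite.
Variable R : realType.

Definition down_finite (Z : set R) : Prop :=
  (forall z, Z z -> 0 <= z) /\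
  forall g, exists s : seq R, forall z, Z z -> z <= g -> z \in s.

Lemma down_finite_sub (Z1 Z2 : set R) :
  Z1 `<=` Z2 -> down_finite Z2 -> down_finite Z1.
Proof.
move=> sub12 [Z2ge0 Z2low]; split=> [z /sub12/Z2ge0 //|g].
by have [s Hs] := Z2low g; exists s => z /sub12; exact: Hs.
Qed.

(* Sums a + b below g have both summands below g, as both are nonnegative. *)
Lemma down_finite_add (Z1 Z2 : set R) : down_finite Z1 -> down_finite Z2 ->
  down_finite [set a + b | a in Z1 & b in Z2].
Proof.
move=> [Z1ge0 Z1low] [Z2ge0 Z2low]; split.
  by move=> _ [a /Z1ge0 a0 [b /Z2ge0 b0 <-]]; exact: addr_ge0.
move=> g; have [s1 Hs1] := Z1low g; have [s2 Hs2] := Z2low g.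
exists [seq a + b | a <- s1, b <- s2] => _ [a Za [b Zb <-]] abg.
have a0 := Z1ge0 _ Za; have b0 := Z2ge0 _ Zb.
by apply: allpairs_f; [apply: Hs1 | apply: Hs2] => //; lra.
Qed.

(* For a > 0, a * y <= g iff y <= g / a; for a = 0 the image is {0}. *)
Lemma down_finite_scale (a : R) (Z : set R) : 0 <= a -> down_finite Z ->
  down_finite [set a * y | y in Z].
Proof.
move=> a0 [Zge0 Zlow]; split=> [_ [y /Zge0 y0 <-]|g]; first exact: mulr_ge0.
have [a_gt0 | a_le0] := ltP 0 a; last first.
  have -> : a = 0 by apply/eqP; rewrite eq_le a_le0 a0.
  by exists [:: 0] => _ [y _ <-] _; rewrite mul0r mem_head.
have [s Hs] := Zlow (a^-1 * g).
exists [seq a * y | y <- s] => _ [y Zy <-] ayg.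
by apply: map_f; apply: Hs; rewrite // ler_pdivlMl.
Qed.

Definition bigsum_set (I : Type) (s : seq I) (Z : I -> set R) : set R :=
  [set \sum_(k <- s) t k | t in [set t | forall k, Z k (t k)]].

Lemma down_finite_bigsum (I : Type) (s : seq I) (Z : I -> set R) :
  (forall k, down_finite (Z k)) -> down_finite (bigsum_set s Z).
Proof.
move=> Zdf; elim: s => [|a s IHs].
  split=> [_ [t _ <-]|g]; first by rewrite big_nil.
  by exists [:: 0] => _ [t _ <-] _; rewrite big_nil mem_head.
apply: down_finite_sub (down_finite_add (Zdf a) IHs) => _ [t Zt <-].
rewrite big_cons; exists (t a); first exact: Zt.
by exists (\sum_(k <- s) t k); first by exists t.
Qed.

Definition lincomb_set (I : finType) (w : I -> R) (Z : I -> set R) : set R :=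
  bigsum_set (index_enum I) (fun j => [set w j * y | y in Z j]).

Lemma down_finite_lincomb (I : finType) (w : I -> R) (Z : I -> set R) :
  (forall j, 0 <= w j) -> (forall j, down_finite (Z j)) ->
  down_finite (lincomb_set w Z).
Proof.
by move=> w_ge0 Zdf; apply: down_finite_bigsum => j; exact: down_finite_scale.
Qed.

Lemma lincomb_set_mem (I : finType) (w : I -> R) (Z : I -> set R) (t : I -> R) :
  (forall j, Z j (t j)) -> lincomb_set w Z (\sum_j w j * t j).
Proof. by move=> Zt; exists (fun j => w j * t j) => // j; exists (t j). Qed.

Lemma positive_lower_bound (s : seq R) : (forall a, a \in s -> 0 < a) ->
  exists2 e : R, 0 < e & forall a, a \in s -> e <= a.
Proof.
elim: s => [|b s IHs] s_gt0; first by exists 1.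
have [e e_gt0 He] : exists2 e : R, 0 < e & forall a, a \in s -> e <= a.
  by apply: IHs => a sa; apply: s_gt0; rewrite inE sa orbT.
have b_gt0 : 0 < b by apply: s_gt0; rewrite mem_head.
exists (Num.min e b) => [|a]; first by rewrite lt_min e_gt0.
by rewrite inE => /orP[/eqP->|/He ea]; rewrite ge_min ?lexx ?orbT ?ea.
Qed.

Fixpoint bounded_sums (s : seq R) (n : nat) : seq R :=
  if n is n'.+1 then 0 :: [seq a + b | a <- s, b <- bounded_sums s n']
  else [:: 0].

Lemma mem_bounded_sums (s T : seq R) (n : nat) :
  {subset T <= s} -> (size T <= n)%N -> \sum_(e <- T) e \in bounded_sums s n.
Proof.
elim: n T => [|n IHn] [|e T] //= Ts sizeT; rewrite ?big_nil ?mem_head //.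
rewrite big_cons inE; apply/orP; right; apply: allpairs_f.
  by apply: Ts; rewrite mem_head.
by apply: IHn => // x Tx; apply: Ts; rewrite inE Tx orbT.
Qed.

Lemma size_mul_le_sum (T : seq R) (e : R) :
  (forall x, x \in T -> e <= x) -> (size T)%:R * e <= \sum_(x <- T) x.
Proof.
elim: T => [|a T IHT] Te; first by rewrite big_nil mul0r.
rewrite big_cons /= -addn1 natrD mulrDl mul1r addrC lerD //.
  by apply: Te; rewrite mem_head.
by apply: IHT => x Tx; apply: Te; rewrite inE Tx orbT.
Qed.

(* Zero summands do not matter, and the positive summands
   of a sum below [g] are at least [e > 0] (the least positive element of [X]
   below [g]), so there are fewer than [g / e] of them. *)
Lemma down_finite_seqsum (X : set R) : down_finite X ->
  down_finite [set \sum_(e <- T) e | T in [set T | forall e, e \in T -> X e]].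
Proof.
move=> [Xge0 Xlow]; have sum_ge0 (T : seq R) : (forall e, e \in T -> X e) ->
    0 <= \sum_(e <- T) e.
  by move=> TX; rewrite big_seq; apply: sumr_ge0 => e /TX/Xge0.
split=> [_ [T /sum_ge0 ? <-] //|g].
have [s Hs] := Xlow g; pose spos := [seq a <- s | 0 < a].
have [e e_gt0 e_le] : exists2 e : R, 0 < e & forall a, a \in spos -> e <= a.
  by apply: positive_lower_bound => a; rewrite mem_filter => /andP[].
have [g_lt0 | g_ge0] := ltP g 0.
  by exists [::] => _ [T /sum_ge0 ? <-] ?; lra.
exists (bounded_sums spos (Num.Def.archi_bound (g / e))) => _ [T TX <-] sumTg.
have {}TX : forall x, x \in T -> X x := TX.
pose Tpos := [seq x <- T | 0 < x].
have sum_Tpos : \sum_(x <- T) x = \sum_(x <- Tpos) x.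
  rewrite big_filter [RHS]big_mkcond /=; apply: eq_big_seq => x Tx.
  case: ltP => // x_le0; apply/eqP; rewrite eq_le x_le0.
  by rewrite Xge0 //; exact: TX.
have Tpos_spos : {subset Tpos <= spos}.
  move=> x; rewrite !mem_filter => /andP[x_gt0 Tx]; rewrite x_gt0 /=.
  apply: Hs; first exact: TX.
  apply: le_trans sumTg; rewrite (big_rem x Tx) /= lerDl big_seq.
  by apply: sumr_ge0 => y /mem_rem/TX/Xge0.
rewrite sum_Tpos; apply: mem_bounded_sums => //.
have size_le : (size Tpos)%:R <= g / e.
  rewrite ler_pdivlMr //; apply: le_trans sumTg; rewrite sum_Tpos.
  by apply: size_mul_le_sum => x /Tpos_spos/e_le.
rewrite -(ler_nat R); apply: ltW; apply: le_lt_trans size_le _.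
by apply: archi_boundP; rewrite divr_ge0 // ltW.
Qed.

Definition maxsum_set (k : option nat) (X : set R) : set R :=
  [set maxsum k S | S in [set S | forall e, e \in S -> X e]].

(* [maxsum k S] is the sum of a subsequence of [S]. *)
Lemma down_finite_maxsum (k : option nat) (X : set R) : down_finite X ->
  down_finite (maxsum_set k X).
Proof.
move=> /down_finite_seqsum; apply: down_finite_sub => _ [S SX <-].
exists (take (match k with Some k' => minn k' (size S) | None => size S end)
              (sort (fun x y : R => y <= x) S)) => //.
by move=> e /mem_take; rewrite mem_sort => /SX.
Qed.

(* A nonnegative, monotone and unbounded map sends down-finite sets to
   down-finite sets: below any level it only sees a bounded part of its
   input. *)
Lemma down_finite_monotone_image (f : R -> R) (Z : set R) :
  (forall x y, x < y -> f x <= f y) -> (forall y, exists x, y < f x) ->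
  (forall x, 0 <= f x) -> down_finite Z -> down_finite [set f z | z in Z].
Proof.
move=> f_mono f_unbounded f_ge0 [_ Zlow]; split=> [_ [z _ <-] //|g].
have [x0 fx0_gt] := f_unbounded g; have [s Hs] := Zlow x0.
exists [seq f z | z <- s] => _ [z Zz <-] fz_le; apply: map_f; apply: Hs => //.
rewrite leNgt; apply/negP => /f_mono; lra.
Qed.

Lemma down_finite_finite_below (Z : set R) (alpha : R) : down_finite Z ->
  finite_set (Z `\` [set r | Z r /\ alpha < r]).
Proof.
move=> [_ Zlow]; have [s Hs] := Zlow alpha.
apply: sub_finite_set (finite_seq s) => r /= [Zr not_gt]; apply: Hs => //.
by rewrite leNgt; apply/negP => r_gt; exact: not_gt.
Qed.
End DownFinite.

Section MaxSumGNN.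
Variables (R : realType) (Col : finType) (delta : nat).
Variable N : maxsumGNN R Col delta.

Definition preact_set (l : nat) (i : 'I_(dims N l.+1)) : set R :=
  [set a + b | a in lincomb_set (fun j => Amat N l i j) (Xset N l)
             & b in bigsum_set (index_enum Col) (fun c =>
                      lincomb_set (fun j => Bmat N l c i j)
                                  (fun j => maxsum_set (kagg N l) (Xset N l j)))].

Lemma Xset_succ_sub (l : nat) (i : 'I_(dims N l.+1)) :
  Xset N l.+1 i `<=` [set sigma N (w + bvec N l i 0) | w in preact_set i].
Proof.
move=> _ [x [Y [Xx [XY ->]]]].
pose agg c := maxsum_vec (kagg N l) (Y c).
have Ax_mem : lincomb_set (fun j => Amat N l i j) (Xset N l)
                          ((Amat N l *m x) i 0).
  by rewrite mxE; exact: lincomb_set_mem.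
have BY_mem c : lincomb_set (fun j => Bmat N l c i j)
    (fun j => maxsum_set (kagg N l) (Xset N l j)) ((Bmat N l c *m agg c) i 0).
  rewrite mxE; apply: lincomb_set_mem => j; rewrite mxE.
  exists [seq (v : 'cV[R]_(dims N l)) j 0 | v <- Y c] => //.
  by move=> _ /mapP[v Yv ->]; exact: XY Yv j.
exists ((Amat N l *m x) i 0 + (\sum_c (Bmat N l c *m agg c)) i 0); last first.
  by rewrite /Val !mxE.
exists ((Amat N l *m x) i 0) => //.
exists ((\sum_c (Bmat N l c *m agg c)) i 0) => //.
by rewrite summxE; exists (fun c => (Bmat N l c *m agg c) i 0).
Qed.

Lemma Xset_down_finite : monotonic N ->
  forall l, (l <= L N)%N -> forall i, down_finite (Xset N l i).
Proof.
move=> [A_ge0 [B_ge0 [sigma_mono [sigma_unbounded [sigma_ge0 _]]]]].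
elim=> [|l IHl] le_lL i.
  split=> [z /= [->|->]|g]; rewrite ?lexx ?ler01 //.
  by exists [:: 0; 1] => z /= [->|->] _; rewrite !inE eqxx ?orbT.
have {}IHl := IHl (ltnW le_lL).
apply: (down_finite_sub (@Xset_succ_sub l i)).
apply: down_finite_monotone_image => [x y x_lt_y|y|w|].
- by apply: sigma_mono; rewrite ltrD2r.
- have [x gt_y] := sigma_unbounded y.
  by exists (x - bvec N l i 0); rewrite subrK.
- exact: sigma_ge0.
apply: down_finite_add; first exact: down_finite_lincomb (A_ge0 _ le_lL i) IHl.
apply: down_finite_bigsum => c; apply: down_finite_lincomb => j.
  exact: B_ge0.
exact: down_finite_maxsum.
Qed.
End MaxSumGNN.

Theorem theorem1 (R : realType) (Col : finType) (delta : nat)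
  (N : maxsumGNN R Col delta) :
  is_GNN N -> monotonic N ->
  forall l : nat, (l <= L N)%N -> forall i : 'I_(dims N l),
    [set r | Xset N l i r] `<=` [set r | (0 <= r)%R] /\
    forall alpha : R,
      finite_set ([set r | Xset N l i r] `\` [set r | Xset N l i r /\ (r > alpha)%R]).
Proof.
move=> _ Nmono l le_lL i.
have Xset_df := Xset_down_finite Nmono le_lL i.
split=> [r /(Xset_df.1) //|alpha]; exact: down_finite_finite_below.
Qed.
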